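(* Let $G$ be an abelian group of odd order and suppose there exists a Heffter space over $G$ with $r$ parallel classes which is a linear space. Then for every $g\in G$, the order of $g$ divides $r-1$.
   Context: A half-set of an abelian group $G$ of odd order $2v+1\ge7$ is a subset $V\subseteq G\setminus\{0\}$ containing exactly one element of each pair $\{g,-g\}$, $g\ne0$. A Heffter system on $V$ with block size $k$ is a partition of $V$ into blocks of size $k$, each summing to $0$ in $G$. A Heffter space over $G$ is a partial linear space (any two distinct points in at most one block) with point set a half-set $V$ of $G$, together with a resolution (partition of its blocks into parallel classes, each partitioning $V$) in which every parallel class is a Heffter system on $V$. It is a linear space if any two distinct points lie in exactly one block. Its degree is the number of parallel classes. *)

From mathcomp Require Import all_boot all_fingroup.
Set Implicit Arguments. Unset Strict Implicit. Unset Printing Implicit Defensive.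
Local Open Scope group_scope.

(* The abelian group G is written multiplicatively (a finGroupType with
   abelian [set: gT]); identity 1 plays the role of 0, x^-1 that of -x,
   and the product of a block plays the role of its sum. *)

Definition half_set (gT : finGroupType) (V : {set gT}) : Prop :=
  1 \notin V /\ forall g : gT, g != 1 -> (g \in V) != (g^-1 \in V).

Definition heffter_system (gT : finGroupType) (V : {set gT}) (k : nat)
    (P : {set {set gT}}) : Prop :=
  partition P V /\ forall B, B \in P -> (#|B| = k)%N /\ \prod_(x in B) x = 1.

Definition blocks_of (gT : finGroupType) (r : nat)
    (cls : 'I_r -> {set {set gT}}) : {set {set gT}} :=
  \bigcup_(i < r) cls i.

Definition heffter_space (gT : finGroupType) (V : {set gT}) (k r : nat)
    (cls : 'I_r -> {set {set gT}}) : Prop :=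
  [/\ half_set V,
      forall i, heffter_system V k (cls i),
      forall i j, i != j -> cls i :&: cls j = set0 &
      forall x y, x \in V -> y \in V -> x != y ->
        (#|[set B in blocks_of cls | (x \in B) && (y \in B)]| <= 1)%N].

Definition is_linear_space (gT : finGroupType) (V : {set gT}) (r : nat)
    (cls : 'I_r -> {set {set gT}}) : Prop :=
  forall x y, x \in V -> y \in V -> x != y ->
    (#|[set B in blocks_of cls | (x \in B) && (y \in B)]| = 1)%N.

From HB Require Import structures.
From mathcomp Require Import all_boot all_fingroup cyclic.
Set Implicit Arguments. Unset Strict Implicit. Unset Printing Implicit Defensive.
Local Open Scope group_scope.

(* Fix a point x of V.  In every parallel class the block through x has
   product 1, so the other points of that block multiply to x^-1.  Because
   the space is linear and the classes are disjoint, these r punctured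
   blocks partition V minus x, whence the product of V minus x is x^-r.
   Since V itself is partitioned by any class, its product is 1, so
   x^(r-1) = 1.  Every non-identity g lies in V or has its inverse there. *)

Section ResolvedPartialLinearSpace.

Variables (gT : finGroupType) (V : {set gT}) (r : nat).
Variable cls : 'I_r -> {set {set gT}}.
Hypothesis cls_partition : forall i, partition (cls i) V.
Hypothesis cls_disjoint : forall i j, i != j -> cls i :&: cls j = set0.

Lemma pblock_cls_mem i x : x \in V -> pblock (cls i) x \in cls i.
Proof. by move=> xV; rewrite pblock_mem // (cover_partition (cls_partition i)). Qed.

Lemma mem_pblock_cls i x : x \in V -> x \in pblock (cls i) x.
Proof. by move=> xV; rewrite mem_pblock (cover_partition (cls_partition i)). Qed.

Lemma pblock_cls_sub i x : x \in V -> pblock (cls i) x \subset V.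
Proof.
move=> xV; rewrite -(cover_partition (cls_partition i)).
by rewrite /cover (bigcup_sup _ (pblock_cls_mem i xV)).
Qed.

Lemma pblock_cls_blocks_of i x : x \in V -> pblock (cls i) x \in blocks_of cls.
Proof. by move=> xV; apply/bigcupP; exists i => //; apply: pblock_cls_mem. Qed.

Lemma disjoint_pblock_cls x i j :
    (forall y, y \in V -> x != y ->
       #|[set B in blocks_of cls | (x \in B) && (y \in B)]| <= 1)%N ->
    x \in V -> i != j ->
  [disjoint pblock (cls i) x :\ x & pblock (cls j) x :\ x].
Proof.
move=> partial_linear xV neq_ij; apply/pred0P => y /=.
apply/andP => -[/setD1P[neq_yx yBi] /setD1P[_ yBj]].
have yV : y \in V by apply: (subsetP (pblock_cls_sub i xV)).
have Bij : pblock (cls i) x = pblock (cls j) x.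
  have neq_xy : x != y by rewrite eq_sym.
  apply: (card_le1_eqP (partial_linear y yV neq_xy));
    by rewrite inE pblock_cls_blocks_of // mem_pblock_cls.
have := cls_disjoint neq_ij; apply/eqP/set0Pn.
by exists (pblock (cls i) x); rewrite inE pblock_cls_mem // Bij pblock_cls_mem.
Qed.

Lemma bigcup_pblock_cls x :
  is_linear_space V cls -> x \in V ->
  \bigcup_i (pblock (cls i) x :\ x) = V :\ x.
Proof.
move=> linear xV; apply/eqP; rewrite eqEsubset; apply/andP; split.
  by apply/bigcupsP => i _; apply: setSD; apply: pblock_cls_sub.
apply/subsetP => y /setD1P[neq_yx yV].
have neq_xy : x != y by rewrite eq_sym.
have /cards1P[B defB] := introT eqP (linear x y xV yV neq_xy).
have : B \in [set B in blocks_of cls | (x \in B) && (y \in B)] by rewrite defB set11.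
rewrite inE => /andP[/bigcupP[i _ Bi] /andP[xB yB]].
apply/bigcupP; exists i => //.
by rewrite (def_pblock (partition_trivIset (cls_partition i)) Bi xB) !inE neq_yx.
Qed.

End ResolvedPartialLinearSpace.

Section AbelianHeffter.

Variable gT : finGroupType.
Hypothesis gT_abelian : abelian [set: gT].

Lemma mulgC_abelian : commutative (@mul gT).
Proof. by move=> x y; apply: (centsP gT_abelian); rewrite inE. Qed.

HB.instance Definition _ := SemiGroup.isCommutativeLaw.Build gT mul mulgC_abelian.

Lemma prod_heffter_system (V : {set gT}) k P :
  heffter_system V k P -> \prod_(x in V) x = 1.
Proof.
case=> partP prodP; rewrite -(cover_partition partP).
rewrite big_trivIset ?(partition_trivIset partP) //.
by apply: big1 => B /prodP[].
Qed.

Lemma prod_pblock_setD1 (V : {set gT}) k P x :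
  heffter_system V k P -> x \in V -> \prod_(y in pblock P x :\ x) y = x^-1.
Proof.
case=> partP prodP xV.
have xP : x \in cover P by rewrite (cover_partition partP).
have [_] := prodP _ (pblock_mem xP).
by rewrite (big_setD1 x) ?mem_pblock // => /eqP; rewrite -eq_invg_mul => /eqP.
Qed.

Lemma heffter_linear_expg (V : {set gT}) k r (cls : 'I_r -> {set {set gT}}) x :
  heffter_space V k cls -> is_linear_space V cls -> x \in V -> x ^+ r.-1 = 1.
Proof.
case: r cls => [//|r] cls [_ heffter disjoint_cls partial_linear] linear xV.
have partition_cls i : partition (cls i) V by case: (heffter i).
have prodVx : \prod_(y in V :\ x) y = x^-1 ^+ r.+1.
  rewrite -(bigcup_pblock_cls partition_cls linear xV).
  rewrite partition_disjoint_bigcup => [|i j]; last first.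
    by apply: disjoint_pblock_cls => // y; apply: partial_linear.
  under eq_bigr do rewrite (prod_pblock_setD1 (heffter _) xV).
  by rewrite prodg_const card_ord.
have : x * x^-1 ^+ r.+1 = 1.
  by rewrite -prodVx -big_setD1 //; apply: prod_heffter_system (heffter ord0).
rewrite expgS mulgA mulgV mul1g expVgn => /eqP.
by rewrite invg_eq1 => /eqP.
Qed.

End AbelianHeffter.

Lemma half_set_mem (gT : finGroupType) (V : {set gT}) g :
  half_set V -> g != 1 -> (g \in V) || (g^-1 \in V).
Proof. by case=> _ /(_ g) half /half; case: (g \in V); case: (g^-1 \in V). Qed.

Theorem proposition2p1 (gT : finGroupType) (r : nat) :
  abelian [set: gT] -> odd #|gT| -> (7 <= #|gT|)%N ->
  (exists (V : {set gT}) (k : nat) (cls : 'I_r -> {set {set gT}}),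
      heffter_space V k cls /\ is_linear_space V cls) ->
  forall g : gT, (#[g] %| r - 1)%N.
Proof.
move=> abelian_gT _ _ [V [k [cls [heffter linear]]]] g.
have expg_V x : x \in V -> x ^+ r.-1 = 1.
  exact: (heffter_linear_expg abelian_gT heffter linear).
rewrite subn1 order_dvdn; have [-> | gn1] := eqVneq g 1; first by rewrite expg1n.
have half : half_set V by case: heffter.
case/orP: (half_set_mem half gn1) => [/expg_V -> // | /expg_V].
by rewrite expVgn => /eqP; rewrite invg_eq1.
Qed.
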